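(* If $C$ is a free $E$-linear code of length $2n$, then $LSHull(C)=SHull(C)$.
   Context: $E=\langle \kappa,\tau \mid 2\kappa=2\tau=0,\ \kappa^2=\kappa,\ \tau^2=\tau,\ \kappa\tau=\kappa,\ \tau\kappa=\tau\rangle$ is the non-unital ring $\{0,\kappa,\tau,\zeta\}$, $\zeta=\kappa+\tau$, with $e\kappa=e\tau=e$, $e\zeta=0$ for all $e\in E$. Every $e\in E$ is uniquely $u\kappa+v\zeta$ ($u,v\in\mathbb{F}_2$); $\pi(u\kappa+v\zeta)=u$, componentwise. An $E$-linear code of length $2n$ is a left $E$-submodule $C\subseteq E^{2n}$; $C_{Res}=\pi(C)$, $C_{Tor}=\{v\in\mathbb{F}_2^{2n}:\zeta v\in C\}$ (componentwise, $0\cdot\zeta=0,1\cdot\zeta=\zeta$); $C$ is free if $C_{Res}=C_{Tor}$. Symplectic inner product: $\langle (u|v),(u'|v')\rangle_s=\sum_i u_iv'_i+\sum_i v_iu'_i$. $C^{\perp_{S_L}}=\{z\in E^{2n}:\langle z,w\rangle_s=0\ \forall w\in C\}$, $C^{\perp_{S_R}}=\{z\in E^{2n}:\langle w,z\rangle_s=0\ \forall w\in C\}$, $C^{\perp_S}=C^{\perp_{S_L}}\cap C^{\perp_{S_R}}$, $LSHull(C)=C\cap C^{\perp_{S_L}}$, $SHull(C)=C\cap C^{\perp_S}$. *)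

From mathcomp Require Import all_boot.
Set Implicit Arguments. Unset Strict Implicit. Unset Printing Implicit Defensive.

(* The non-unital ring E = {0, kappa, tau, zeta}.  Every e in E is uniquely
   u*kappa + v*zeta with u v in F_2; we represent e by the pair (u, v). *)
Definition E := (bool * bool)%type.
Definition E0 : E := (false, false).
Definition kappa : E := (true, false).
Definition zeta : E := (false, true).
Definition tau : E := (true, true).   (* tau = kappa + zeta *)

Definition Eadd (a b : E) : E := (xorb a.1 b.1, xorb a.2 b.2).
Definition Epi (a : E) : bool := a.1.
(* Multiplication: e * kappa = e * tau = e, e * zeta = 0, extended
   bilinearly; hence a * b = pi(b) a. *)
Definition Emul (a b : E) : E := if Epi b then a else E0.

Lemma Emul_table :
  [/\ Emul kappa kappa = kappa, Emul tau tau = tau,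
      Emul kappa tau = kappa & Emul tau kappa = tau].
Proof. by []. Qed.

(* Words of length 2n, written (u | v) with u, v of length n. *)
Definition word (n : nat) := ({ffun 'I_n -> E} * {ffun 'I_n -> E})%type.
Definition bword (n : nat) := ({ffun 'I_n -> bool} * {ffun 'I_n -> bool})%type.

Definition wzero n : word n := ([ffun=> E0], [ffun=> E0]).
Definition wadd n (x y : word n) : word n :=
  ([ffun i => Eadd (x.1 i) (y.1 i)], [ffun i => Eadd (x.2 i) (y.2 i)]).
Definition wscale n (e : E) (x : word n) : word n :=
  ([ffun i => Emul e (x.1 i)], [ffun i => Emul e (x.2 i)]).

Definition E_linear n (C : {set word n}) : Prop :=
  [/\ wzero n \in C,
      (forall x y, x \in C -> y \in C -> wadd x y \in C) &
      (forall e x, x \in C -> wscale e x \in C)].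

Definition wpi n (x : word n) : bword n :=
  ([ffun i => Epi (x.1 i)], [ffun i => Epi (x.2 i)]).
Definition bzeta (b : bool) : E := if b then zeta else E0.
Definition wzeta n (v : bword n) : word n :=
  ([ffun i => bzeta (v.1 i)], [ffun i => bzeta (v.2 i)]).

Definition C_Res n (C : {set word n}) : {set bword n} := [set wpi x | x in C].
Definition C_Tor n (C : {set word n}) : {set bword n} :=
  [set v | wzeta v \in C].
Definition free_code n (C : {set word n}) : Prop := C_Res C = C_Tor C.

Definition Esum n (f : 'I_n -> E) : E := \big[Eadd/E0]_(i < n) f i.
Definition sip n (x y : word n) : E :=
  Eadd (Esum (fun i => Emul (x.1 i) (y.2 i)))
       (Esum (fun i => Emul (x.2 i) (y.1 i))).

Definition perp_SL n (C : {set word n}) : {set word n} :=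
  [set z | [forall w in C, sip z w == E0]].
Definition perp_SR n (C : {set word n}) : {set word n} :=
  [set z | [forall w in C, sip w z == E0]].
Definition perp_S n (C : {set word n}) : {set word n} :=
  perp_SL C :&: perp_SR C.

Definition LSHull n (C : {set word n}) : {set word n} := C :&: perp_SL C.
Definition SHull n (C : {set word n}) : {set word n} := C :&: perp_S C.

(* Write e in E as u kappa + v zeta.  Since a * b = pi(b) a, the kappa-coordinate
   of <x, y>_s is the binary symplectic form of pi(x) and pi(y), which is
   symmetric, and its zeta-coordinate is the binary symplectic form of the
   zeta-part of x against pi(y).  For a codeword w, zeta * (zeta-part of w)
   = w + kappa w lies in C, so freeness makes the zeta-part of w equal to
   pi(w') for some w' in C.  Hence <w, z>_s is controlled by <z, w>_s and
   <z, w'>_s, and left orthogonality to C implies right orthogonality. *)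
From mathcomp Require Import all_boot.
Set Implicit Arguments. Unset Strict Implicit. Unset Printing Implicit Defensive.

Definition bsip n (u v : bword n) : bool :=
  xorb (\big[xorb/false]_(i < n) (u.1 i && v.2 i))
       (\big[xorb/false]_(i < n) (u.2 i && v.1 i)).

Definition wzpart n (x : word n) : bword n :=
  ([ffun i => (x.1 i).2], [ffun i => (x.2 i).2]).

Lemma xorbC (a b : bool) : xorb a b = xorb b a.
Proof. by case: a; case: b. Qed.

Lemma bsipC n (u v : bword n) : bsip u v = bsip v u.
Proof.
rewrite /bsip xorbC; congr xorb; apply: eq_bigr => i _; exact: andbC.
Qed.

Lemma Esum_fst n (f : 'I_n -> E) : (Esum f).1 = \big[xorb/false]_(i < n) (f i).1.
Proof. exact: (big_morph fst (fun _ _ => erefl) erefl). Qed.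

Lemma Esum_snd n (f : 'I_n -> E) : (Esum f).2 = \big[xorb/false]_(i < n) (f i).2.
Proof. exact: (big_morph snd (fun _ _ => erefl) erefl). Qed.

Lemma Emul_fst (a b : E) : (Emul a b).1 = a.1 && Epi b.
Proof. by case: b => [[]] []; rewrite ?andbT ?andbF. Qed.

Lemma Emul_snd (a b : E) : (Emul a b).2 = a.2 && Epi b.
Proof. by case: b => [[]] []; rewrite ?andbT ?andbF. Qed.

Lemma sip_fst n (x y : word n) : (sip x y).1 = bsip (wpi x) (wpi y).
Proof.
by rewrite /sip /bsip /= !Esum_fst; congr xorb; apply: eq_bigr => i _;
  rewrite Emul_fst !ffunE.
Qed.

Lemma sip_snd n (x y : word n) : (sip x y).2 = bsip (wzpart x) (wpi y).
Proof.
by rewrite /sip /bsip /= !Esum_snd; congr xorb; apply: eq_bigr => i _;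
  rewrite Emul_snd !ffunE.
Qed.

Lemma sip_fstC n (x y : word n) : (sip x y).1 = (sip y x).1.
Proof. by rewrite !sip_fst bsipC. Qed.

Lemma wzeta_wzpart n (x : word n) : wzeta (wzpart x) = wadd x (wscale kappa x).
Proof.
by congr pair; apply/ffunP => i; rewrite !ffunE; case: (_ i) => [] [] [].
Qed.

Section FreeCode.

Variables (n : nat) (C : {set word n}).
Hypotheses (linC : E_linear C) (freeC : free_code C).

Lemma wzpart_Tor x : x \in C -> wzpart x \in C_Tor C.
Proof.
case: linC => _ addC scaleC xC.
by rewrite inE wzeta_wzpart addC ?scaleC.
Qed.

Lemma wzpart_Res x : x \in C -> exists2 x', x' \in C & wzpart x = wpi x'.
Proof. by move=> /wzpart_Tor; rewrite -freeC => /imsetP. Qed.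

Lemma perp_SL_sub_perp_SR : perp_SL C \subset perp_SR C.
Proof.
apply/subsetP => z; rewrite !inE => /forall_inP zperp.
apply/forall_inP => w wC.
have perp_fst w' : w' \in C -> (sip z w').1 = false.
  by move=> /zperp /eqP ->.
have [w' w'C wzE] := wzpart_Res wC.
have sip1 : (sip w z).1 = false by rewrite sip_fstC perp_fst.
have sip2 : (sip w z).2 = false by rewrite sip_snd wzE -sip_fst sip_fstC perp_fst.
by move: sip1 sip2; case: (sip w z) => [] [] [].
Qed.

Lemma perp_S_free : perp_S C = perp_SL C.
Proof. exact/setIidPl/perp_SL_sub_perp_SR. Qed.

End FreeCode.

Theorem mainTheorem16 (n : nat) (C : {set word n}) :
  E_linear C -> free_code C -> LSHull C = SHull C.
Proof. by move=> linC freeC; rewrite /SHull perp_S_free. Qed.
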